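(* Let $A$ be an alphabet and $A^\ast$ the set of all finite words over $A$ (including the empty word), regarded as the structure $(A^\ast,\cdot)$ with the binary concatenation operation. For all words $\mathbf a,\mathbf b,\mathbf c,\mathbf d\in A^\ast$, if $\mathbf a\mathbf b=\mathbf c\mathbf d$ then $(A^\ast,\cdot)\models \mathbf a:\mathbf b::\mathbf c:\mathbf d$.
   Context: The analogical proportion relation: a c-formula is a conjunctive formula (built from atomic formulas using only $\wedge,\exists,\forall$; parameters from the universe allowed) with free variables exactly $x,y$ whose dependency graph (vertices: its variables; edge $\{w,z\}$ iff $w,z$ occur in a common atomic subformula) is connected. $\uparrow_{\mathfrak A}(a\to b)=\{\alpha:\mathfrak A\models\alpha(a,b)\}$, $\uparrow_{\mathfrak A}(a\to b:\cdot\, c\to d)=\uparrow_{\mathfrak A}(a\to b)\cap\uparrow_{\mathfrak A}(c\to d)$. A c-formula is trivial iff it is in $\uparrow_{\mathfrak A}(a\to b:\cdot\, c\to d)$ for all $a,b,c,d$; $\emptyset_{\mathfrak A}$ is the set of these. $\mathfrak A\models a\to b:\cdot\, c\to d$ iff either $\uparrow_{\mathfrak A}(a\to b)\cup\uparrow_{\mathfrak A}(c\to d)$ consists only of trivial formulas, or $\uparrow_{\mathfrak A}(a\to b:\cdot\, c\to d)$ contains a non-trivial formula and for every $d'$, $\emptyset_{\mathfrak A}\subsetneq\uparrow(a\to b:\cdot\, c\to d)\subseteq\uparrow(a\to b:\cdot\, c\to d')$ implies $\emptyset_{\mathfrak A}\subsetneq\uparrow(a\to b:\cdot\, c\to d')\subseteq\uparrow(a\to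 b:\cdot\, c\to d)$. $\mathfrak A\models a:b::c:d$ iff $\mathfrak A\models a\to b:\cdot\, c\to d$, $b\to a:\cdot\, d\to c$, $c\to d:\cdot\, a\to b$ and $d\to c:\cdot\, b\to a$. *)

From Stdlib Require Import List Arith Relations.
Import ListNotations.
Set Implicit Arguments.

Section Words.
Variable A : Type.

Inductive term : Type :=
| TVar : nat -> term
| TPar : list A -> term
| TCat : term -> term -> term.

Inductive formula : Type :=
| FEq  : term -> term -> formula
| FAnd : formula -> formula -> formula
| FEx  : nat -> formula -> formula
| FAll : nat -> formula -> formula.

Fixpoint tvars (t : term) : list nat :=
  match t with
  | TVar n => [n]
  | TPar _ => []
  | TCat t1 t2 => tvars t1 ++ tvars t2
  end.

Fixpoint fv (f : formula) : list nat :=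
  match f with
  | FEq t1 t2 => tvars t1 ++ tvars t2
  | FAnd f g => fv f ++ fv g
  | FEx n f => remove Nat.eq_dec n (fv f)
  | FAll n f => remove Nat.eq_dec n (fv f)
  end.

(* all variables of the formula (vertices of the dependency graph) *)
Fixpoint allvars (f : formula) : list nat :=
  match f with
  | FEq t1 t2 => tvars t1 ++ tvars t2
  | FAnd f g => allvars f ++ allvars g
  | FEx n f => n :: allvars f
  | FAll n f => n :: allvars f
  end.

Fixpoint atoms (f : formula) : list (term * term) :=
  match f with
  | FEq t1 t2 => [(t1, t2)]
  | FAnd f g => atoms f ++ atoms g
  | FEx _ f => atoms f
  | FAll _ f => atoms f
  end.

Definition dep_edge (f : formula) (u v : nat) : Prop :=
  exists t1 t2, In (t1, t2) (atoms f) /\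
    In u (tvars t1 ++ tvars t2) /\ In v (tvars t1 ++ tvars t2).

Definition dep_connected (f : formula) : Prop :=
  forall u v, In u (allvars f) -> In v (allvars f) ->
    clos_refl_trans nat (dep_edge f) u v.

(* x is variable 0, y is variable 1 *)
Definition cformula (f : formula) : Prop :=
  (forall n, In n (fv f) <-> (n = 0 \/ n = 1)) /\ dep_connected f.

Fixpoint teval (e : nat -> list A) (t : term) : list A :=
  match t with
  | TVar n => e n
  | TPar w => w
  | TCat t1 t2 => teval e t1 ++ teval e t2
  end.

Definition upd (e : nat -> list A) (n : nat) (w : list A) : nat -> list A :=
  fun m => if Nat.eq_dec m n then w else e m.

Fixpoint sat (e : nat -> list A) (f : formula) : Prop :=
  match f with
  | FEq t1 t2 => teval e t1 = teval e t2
  | FAnd f g => sat e f /\ sat e g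
  | FEx n f => exists w, sat (upd e n w) f
  | FAll n f => forall w, sat (upd e n w) f
  end.

Definition holds (f : formula) (a b : list A) : Prop :=
  sat (fun n => match n with 0 => a | 1 => b | _ => [] end) f.

Definition up (a b : list A) : formula -> Prop :=
  fun al => cformula al /\ holds al a b.

Definition up2 (a b c d : list A) : formula -> Prop :=
  fun al => up a b al /\ up c d al.

Definition trivial (al : formula) : Prop :=
  forall a b c d, up2 a b c d al.

Definition triv_strict_sub (S : formula -> Prop) : Prop :=
  (forall al, trivial al -> S al) /\ (exists al, S al /\ ~ trivial al).

Definition sub (S T : formula -> Prop) : Prop := forall al, S al -> T al.

Definition arrow_prop (a b c d : list A) : Prop :=
  (forall al, (up a b al \/ up c d al) -> trivial al)
  \/
  ((exists al, up2 a b c d al /\ ~ trivial al) /\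
   forall d' : list A,
     (triv_strict_sub (up2 a b c d) /\ sub (up2 a b c d) (up2 a b c d')) ->
     (triv_strict_sub (up2 a b c d') /\ sub (up2 a b c d') (up2 a b c d))).

Definition analogy (a b c d : list A) : Prop :=
  arrow_prop a b c d /\ arrow_prop b a d c /\
  arrow_prop c d a b /\ arrow_prop d c b a.

End Words.

(* The equation [x y = a b] is a conjunctive formula with connected dependency
   graph that holds for [a -> b] and [c -> d], and it determines [y] from [x];
   so any [d'] whose justifications contain those of [c -> d] satisfies
   [c d' = a b = c d], i.e. [d' = d].  The mirrored formula [y x = a b] handles
   [b -> a :. d -> c] in the same way, with cancellation on the right.  Over an
   alphabet with a letter these formulas are non-trivial; over the empty
   alphabet every word is empty and every formula is trivial. *)
From Stdlib Require Import List Lia Classical Relations.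
Import ListNotations.

Section WordAnalogy.
Variable A : Type.

Lemma words_of_empty_alphabet : ~ inhabited A -> forall w : list A, w = [].
Proof. intros NA [|x w]; [reflexivity | exfalso; exact (NA (inhabits x))]. Qed.

Lemma arrow_prop_empty_alphabet (a b c d : list A) :
  ~ inhabited A -> arrow_prop a b c d.
Proof.
  intro NA; pose proof (words_of_empty_alphabet NA) as Enil.
  left; intros al Hal a' b' c' d'.
  assert (Hal' : up [] [] al).
  { destruct Hal as [Hal | Hal];
      [rewrite (Enil a), (Enil b) in Hal | rewrite (Enil c), (Enil d) in Hal];
      exact Hal. }
  rewrite (Enil a'), (Enil b'), (Enil c'), (Enil d'); split; exact Hal'.
Qed.

Lemma arrow_prop_of_functional (phi : formula A) (a b c d : list A) :
  cformula phi -> ~ trivial phi -> holds phi a b -> holds phi c d ->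
  (forall d', holds phi c d' -> d' = d) -> arrow_prop a b c d.
Proof.
  intros Hphi Hnt Hab Hcd Hfun; right; split.
  - exists phi; split; [split; split; assumption | exact Hnt].
  - intros d' [Hstrict Hsub].
    assert (Hd' : d' = d).
    { apply Hfun, (Hsub phi); split; split; assumption. }
    subst d'; split; [exact Hstrict | intros al Hal; exact Hal].
Qed.

Definition cat_eq (i j : nat) (w : list A) : formula A :=
  FEq (TCat (TVar A i) (TVar A j)) (TPar w).

Lemma cformula_cat_eq (i j : nat) (w : list A) :
  (i = 0 /\ j = 1) \/ (i = 1 /\ j = 0) -> cformula (cat_eq i j w).
Proof.
  intro Hij; split.
  - intro n; simpl; intuition subst; auto.
  - intros u v Hu Hv; apply rt_step.
    exists (TCat (TVar A i) (TVar A j)), (TPar w); simpl in *; intuition.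
Qed.

(* Witness of non-triviality: [x := y := l w] for a letter [l], by length. *)
Lemma cat_eq_not_trivial (i j : nat) (w : list A) :
  inhabited A -> (i = 0 /\ j = 1) \/ (i = 1 /\ j = 0) -> ~ trivial (cat_eq i j w).
Proof.
  intros [l] Hij Htriv.
  destruct (Htriv (l :: w) (l :: w) [] []) as [[_ Hw] _].
  apply (f_equal (@length A)) in Hw.
  destruct Hij as [[-> ->] | [-> ->]]; cbn in Hw; rewrite length_app in Hw; lia.
Qed.

Lemma arrow_prop_of_cat (a b c d : list A) :
  inhabited A -> a ++ b = c ++ d -> arrow_prop a b c d.
Proof.
  intros HA Habcd.
  apply (@arrow_prop_of_functional (cat_eq 0 1 (a ++ b))).
  - apply cformula_cat_eq; auto.
  - apply cat_eq_not_trivial; auto.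
  - reflexivity.
  - exact (eq_sym Habcd).
  - intros d' Hd'; unfold holds in Hd'; cbn in Hd'.
    rewrite Habcd in Hd'; exact (app_inv_head _ _ _ Hd').
Qed.

Lemma arrow_prop_of_cat_rev (a b c d : list A) :
  inhabited A -> a ++ b = c ++ d -> arrow_prop b a d c.
Proof.
  intros HA Habcd.
  apply (@arrow_prop_of_functional (cat_eq 1 0 (a ++ b))).
  - apply cformula_cat_eq; auto.
  - apply cat_eq_not_trivial; auto.
  - reflexivity.
  - exact (eq_sym Habcd).
  - intros c' Hc'; unfold holds in Hc'; cbn in Hc'.
    rewrite Habcd in Hc'; exact (app_inv_tail _ _ _ Hc').
Qed.

End WordAnalogy.

Theorem corollary11 (A : Type) (a b c d : list A) :
  a ++ b = c ++ d -> analogy a b c d.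
Proof.
  intro Habcd.
  destruct (classic (inhabited A)) as [HA | NA];
    [| repeat split; apply arrow_prop_empty_alphabet; exact NA].
  repeat split.
  - apply arrow_prop_of_cat; assumption.
  - apply arrow_prop_of_cat_rev; assumption.
  - apply arrow_prop_of_cat; [assumption | symmetry; assumption].
  - apply arrow_prop_of_cat_rev; [assumption | symmetry; assumption].
Qed.
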